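(* With $R$, $I$, $\Gamma$, $\mathcal{C}$, $\mathcal{D}$ and $\Xi:\mathcal{C}\to\mathcal{D}$ as in the context, define $\Psi:\mathcal{D}\to\mathcal{C}$ as follows. For $\rho=(M_u,M_v,\psi_e,\psi_f)\in\mathcal{D}$, let $M=(S_1\otimes_{\mathbb{K}}M_u)\oplus M_v$ with $x((rf_1)\otimes m_u,m_v)=((xrf_1)\otimes m_u,\psi_f(m_v))$ and $y((rf_1)\otimes m_u,m_v)=((yrf_1)\otimes m_u+f_1\otimes\psi_e(m_v),\psi_f^{-1}(m_v))$, and let $\alpha$ be the inclusion of $M_v$ into $M$ (with $M/IM$ identified with $M_v$); set $\Psi(\rho)=(M,\alpha)$. For a morphism $\varphi=(\varphi_u,\varphi_v)$ in $\mathcal{D}$ set $\Psi(\varphi)=(\mathrm{id}_{S_1}\otimes\varphi_u)\oplus\varphi_v$. Then $\Psi$ is a functor $\mathcal{D}\to\mathcal{C}$, and $\Xi$ and $\Psi$ induce an equivalence of categories $\mathcal{C}\cong\mathcal{D}$.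
   Context: $\mathbb{K}$ is a field, $R=\mathbb{K}\langle x,y\rangle/(xy-1)$, $I=\langle1-yx\rangle$, $f_1=1-yx$, $S_1=Rf_1$. $\Gamma$ is the quiver with vertices $u,v$, an arrow $e:v\to u$ and a loop $f$ at $v$; a representation is $(M_u,M_v,\psi_e:M_v\to M_u,\psi_f:M_v\to M_v)$, and $\mathcal{D}$ is the full subcategory of representations with $\psi_f$ invertible. $\mathcal{C}$ is the category whose objects are weak splitting pairs $(M,\alpha)$: $M$ a left $R$-module and $\alpha:M/IM\to M$ a $\mathbb{K}[x]$-linear splitting of $M\to M/IM$; morphisms $(M,\alpha)\to(N,\beta)$ are $R$-linear $\varphi:M\to N$ with $\operatorname{im}(\varphi\circ\alpha)\subseteq\operatorname{im}\beta$. $\Xi(M,\alpha)=(M_0,\operatorname{im}\alpha,\psi_e,\psi_f)$, where $M_0=\{m\in M:xm=0\}$, $\psi_f$ is multiplication by $x$ on $\operatorname{im}\alpha$, and $\psi_e(m)=m_1$ where $ym=m_1+m_2$ with $m_1\in IM$, $m_2\in\operatorname{im}\alpha$; on morphisms $\Xi$ takes restrictions to $M_0$ and $\operatorname{im}\alpha$. *)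

From HB Require Import structures.
From mathcomp Require Import all_boot all_algebra.
From mathcomp Require Import boolp functions.
Unset Printing Implicit Defensive.
Import GRing.Theory.
Local Open Scope ring_scope.

Record subspace (K : fieldType) (V : lmodType K) := Subspace {
  sp_mem : V -> Prop;
  sp_0 : sp_mem 0;
  sp_lin : forall (a : K) u v, sp_mem u -> sp_mem v -> sp_mem (a *: u + v) }.
Arguments subspace {K} V.
Arguments Subspace {K V} sp_mem sp_0 sp_lin.
Arguments sp_mem {K V} s _. Arguments sp_0 {K V} s. Arguments sp_lin {K V} s a u v _ _.

Section SpType.
Context {K : fieldType} {V : lmodType K} (S : subspace V).
Definition sp_pred : {pred V} := fun v => `[< sp_mem S v >].
Lemma sp_pred_closed : GRing.submod_closed sp_pred.
Proof.
split; first by apply/asboolP; exact: sp_0.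
by move=> a u v /asboolP Hu /asboolP Hv; apply/asboolP; exact: sp_lin.
Qed.
HB.instance Definition _ := GRing.isSubmodClosed.Build K V sp_pred sp_pred_closed.
Record sptype := SpElem { spval : V; spvalP : spval \in sp_pred }.
HB.instance Definition _ := [isSub for spval].
HB.instance Definition _ := [Choice of sptype by <:].
HB.instance Definition _ := [SubChoice_isSubLmodule of sptype by <:].

(* the element v of V seen in S (0 if v is not in S) *)
Definition sp_in (v : V) : sptype :=
  match pselect (sp_mem S v) with
  | left H => SpElem v (asboolT H)
  | right _ => 0
  end.
End SpType.
Arguments sp_in {K V} S v.
Arguments spval {K V S} s. Arguments spvalP {K V S} s. Arguments SpElem {K V S} spval spvalP.

Section KerIm.
Context {K : fieldType} {V W : lmodType K} (f : {linear V -> W}).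
Lemma ker_sp0 : f 0 = 0. Proof. exact: linear0. Qed.
Lemma ker_splin (a : K) u v : f u = 0 -> f v = 0 -> f (a *: u + v) = 0.
Proof. by move=> Hu Hv; rewrite linearP Hu Hv scaler0 addr0. Qed.
Definition ker_sp : subspace V := Subspace _ ker_sp0 ker_splin.
Lemma im_sp0 : exists u, f u = 0. Proof. by exists 0; exact: linear0. Qed.
Lemma im_splin (a : K) w w' :
  (exists u, f u = w) -> (exists u, f u = w') -> exists u, f u = a *: w + w'.
Proof. by move=> [u <-] [u' <-]; exists (a *: u + u'); rewrite linearP. Qed.
Definition im_sp : subspace W := Subspace _ im_sp0 im_splin.
End KerIm.

Definition restr {K : fieldType} {V W : lmodType K} (f : V -> W)
  (S : subspace V) (T : subspace W) : sptype S -> sptype T :=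
  fun v => sp_in T (f (spval v)).


Section LinOr0.
Context {K : fieldType} {U W : lmodType K}.
Definition lin_or0 (g : U -> W) : U -> W :=
  if pselect (linear g) then g else (fun _ => 0).
Lemma lin_or0_linear (g : U -> W) : linear (lin_or0 g).
Proof.
rewrite /lin_or0; destruct (pselect (linear g)) as [H|H]; first exact: H.
by move=> a u v; rewrite scaler0 addr0.
Qed.
HB.instance Definition _ (g : U -> W) :=
  GRing.isLinear.Build K U W *:%R (lin_or0 g) (lin_or0_linear g).
End LinOr0.

(* R = K<x,y>/(xy - 1): a left R-module is a K-vector space M with two      *)
(* K-linear endomorphisms x, y (the actions of x and y) with x y = 1.       *)

(* data of a pair (M, alpha); alpha is encoded as the K-linear endomorphism
   alpha o pi of M, where pi : M -> M/IM is the projection *)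
Record WSP (K : fieldType) := WSPair {
  wM : lmodType K;
  wx : {linear wM -> wM};
  wy : {linear wM -> wM};
  walpha : {linear wM -> wM} }.
Arguments wM {K} w. Arguments wx {K} w. Arguments wy {K} w. Arguments walpha {K} w.

Section WSPdefs.
Context {K : fieldType} (A : WSP K).
Local Notation M := (wM A).
Local Notation x := (wx A).
Local Notation y := (wy A).
Local Notation alpha := (walpha A).

Definition is_Rmodule : Prop := forall m : M, x (y m) = m.

(* m lies in IM, where I = <1 - yx> is the two-sided ideal of R generated by
   f_1 = 1 - yx:  IM = R f_1 R M = R f_1 M is the R-submodule of M generated by
   the elements (1 - yx) n, n in M *)
Definition in_IM (m : M) : Prop :=
  forall P : M -> Prop,
    P 0 ->
    (forall (a : K) u v, P u -> P v -> P (a *: u + v)) ->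
    (forall u, P u -> P (x u)) ->
    (forall u, P u -> P (y u)) ->
    (forall n, P (n - y (x n))) ->
    P m.

(* alpha = alpha0 o pi for a K[x]-linear splitting alpha0 : M/IM -> M of pi:
   alpha is K-linear (built in), commutes with x, vanishes on IM (so factors
   through pi), and pi o alpha0 = id, i.e. m - alpha m lies in IM *)
Definition is_weak_splitting : Prop :=
  [/\ forall m, alpha (x m) = x (alpha m),
      forall m, in_IM m -> alpha m = 0
    & forall m, in_IM (m - alpha m)].

Definition is_WSP_obj : Prop := is_Rmodule /\ is_weak_splitting.
End WSPdefs.

Definition is_WSP_hom {K : fieldType} (A B : WSP K) (phi : wM A -> wM B) : Prop :=
  [/\ linear phi,
      forall m, phi (wx A m) = wx B (phi m),
      forall m, phi (wy A m) = wy B (phi m)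
    & forall m, exists n, phi (walpha A m) = walpha B n].


(* The quiver Gamma: vertices u, v, arrow e : v -> u, loop f at v.          *)

Record QRep (K : fieldType) := QuivRep {
  Mu : lmodType K;
  Mv : lmodType K;
  psi_e : {linear Mv -> Mu};
  psi_f : {linear Mv -> Mv} }.
Arguments Mu {K} q. Arguments Mv {K} q. Arguments psi_e {K} q. Arguments psi_f {K} q.

Definition is_D_obj {K : fieldType} (rho : QRep K) : Prop := bijective (psi_f rho).

Definition is_D_hom {K : fieldType} (rho sigma : QRep K)
  (phu : Mu rho -> Mu sigma) (phv : Mv rho -> Mv sigma) : Prop :=
  [/\ linear phu, linear phv,
      forall m, phu (psi_e rho m) = psi_e sigma (phv m)
    & forall m, phv (psi_f rho m) = psi_f sigma (phv m)].


Section Xi.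
Context {K : fieldType}.

Definition M0_sp (A : WSP K) : subspace (wM A) := ker_sp (wx A).
Definition imalpha_sp (A : WSP K) : subspace (wM A) := im_sp (walpha A).


(* psi_e(m) = m_1, where y m = m_1 + m_2 with m_1 in IM and m_2 in im alpha;
   with alpha encoded as alpha0 o pi, m_2 = alpha (y m), m_1 = y m - alpha (y m) *)
Definition Xi_obj (A : WSP K) : QRep K :=
  @QuivRep K (sptype (M0_sp A)) (sptype (imalpha_sp A))
    (lin_or0 (restr (fun m => wy A m - walpha A (wy A m)) (imalpha_sp A) (M0_sp A)))
    (lin_or0 (restr (wx A) (imalpha_sp A) (imalpha_sp A))).

Definition Xi_hom_u (A B : WSP K) (phi : wM A -> wM B) :
  Mu (Xi_obj A) -> Mu (Xi_obj B) := restr phi (M0_sp A) (M0_sp B).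
Definition Xi_hom_v (A B : WSP K) (phi : wM A -> wM B) :
  Mv (Xi_obj A) -> Mv (Xi_obj B) := restr phi (imalpha_sp A) (imalpha_sp B).
End Xi.


(* S_1 = R f_1 has K-basis (y^i f_1)_{i in nat} (x f_1 = 0), so             *)
(* S_1 (x)_K M_u is modelled as the finitely supported sequences            *)
(* s : nat -> M_u, s = sum_i (y^i f_1) (x) s i.                             *)

Section Psi.
Context {K : fieldType}.

Definition finsupp_sp (U : lmodType K) : subspace (nat -> U).
Proof.
refine (@Subspace K (nat -> U) (fun s => exists n, forall i, (n <= i)%N -> s i = 0) _ _).
- by exists 0%N.
- move=> a u v [n Hn] [n' Hn']; exists (maxn n n') => i Hi.
  have -> : (a *: u + v) i = a *: u i + v i by [].
  rewrite Hn ?Hn' ?scaler0 ?addr0 //.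
  + by apply: leq_trans Hi; exact: leq_maxr.
  + by apply: leq_trans Hi; exact: leq_maxl.
Defined.


Definition S1tensor (U : lmodType K) : lmodType K := sptype (finsupp_sp U).

Definition mkS1 {U : lmodType K} (s : nat -> U) : S1tensor U := sp_in (finsupp_sp U) s.

(* the inverse of a bijection (identity if there is none) *)
Definition finv {T : Type} (f : T -> T) : T -> T :=
  match pselect (exists g : T -> T, cancel f g /\ cancel g f) with
  | left H => proj1_sig (cid H)
  | right _ => id
  end.

(* x ((y^i f_1) (x) m, m_v) = ((x y^i f_1) (x) m, psi_f m_v),
   with x y^(i+1) f_1 = y^i f_1 and x f_1 = 0 *)
Definition Psi_x_fun (rho : QRep K) (p : S1tensor (Mu rho) * Mv rho) :
    S1tensor (Mu rho) * Mv rho :=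
  (mkS1 (fun i => spval p.1 i.+1), psi_f rho p.2).

(* y ((y^i f_1) (x) m, m_v) = ((y^(i+1) f_1) (x) m + f_1 (x) psi_e m_v, psi_f^-1 m_v) *)
Definition Psi_y_fun (rho : QRep K) (p : S1tensor (Mu rho) * Mv rho) :
    S1tensor (Mu rho) * Mv rho :=
  (mkS1 (fun i => if i is j.+1 then spval p.1 j else psi_e rho p.2),
   finv (psi_f rho) p.2).

(* alpha = inclusion of M_v, composed with pi : M -> M/IM = M_v *)
Definition Psi_alpha_fun (rho : QRep K) (p : S1tensor (Mu rho) * Mv rho) :
    S1tensor (Mu rho) * Mv rho := (0, p.2).



Definition Psi_obj (rho : QRep K) : WSP K :=
  @WSPair K (S1tensor (Mu rho) * Mv rho)%type
    (lin_or0 (Psi_x_fun rho)) (lin_or0 (Psi_y_fun rho)) (lin_or0 (Psi_alpha_fun rho)).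

Definition Psi_hom (rho sigma : QRep K) (phu : Mu rho -> Mu sigma)
    (phv : Mv rho -> Mv sigma) : wM (Psi_obj rho) -> wM (Psi_obj sigma) :=
  fun p => (mkS1 (fun i => phu (spval p.1 i)), phv p.2).
End Psi.

From Pilot Require Import Defs.
From HB Require Import structures.
From mathcomp Require Import all_boot all_algebra.
From mathcomp Require Import boolp functions.
Import GRing.Theory.
Local Open Scope ring_scope.

(* For a weak splitting pair (M, alpha) we have M = IM (+) im alpha with alpha o x = x o alpha,
   and xy = 1 makes x an automorphism of im alpha with inverse alpha o y.  The submodule IM is
   generated by the image of f1 = 1 - yx; as x f1 = 0, x is locally nilpotent on IM and the
   coefficients k_i(m) = f1 x^i (m - alpha m) lie in M_0 = ker x.  The map
   m |-> (sum_i y^i f1 (x) k_i(m), alpha m) is then an isomorphism M ~= Psi (Xi M): it is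
   injective because x^i d = y x^(i+1) d for all i and x^N d = 0 force d = 0, and surjective
   because S_1 (x) M_u is generated under y by the f1 (x) u.  Conversely, in Psi(rho) the
   kernel of x is f1 (x) M_u and im alpha is M_v, whence Xi (Psi rho) ~= rho. *)

Section LinearAlgebra.
Context {K : fieldType}.

Lemma lin_or0E {U W : lmodType K} {g : U -> W} : linear g -> lin_or0 g =1 g.
Proof. by move=> g_lin u; rewrite /lin_or0; case: pselect. Qed.

Section LinearFun.
Context {U W : lmodType K} {f : U -> W} (f_lin : linear f).

Lemma linear_fun0 : f 0 = 0.
Proof. by rewrite -(lin_or0E f_lin) linear0. Qed.

Lemma linear_funD u v : f (u + v) = f u + f v.
Proof. by rewrite -!(lin_or0E f_lin) linearD. Qed.

Lemma linear_funB u v : f (u - v) = f u - f v.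
Proof. by rewrite -!(lin_or0E f_lin) linearB. Qed.

Lemma linear_can2 f' : cancel f f' -> cancel f' f -> linear f'.
Proof.
by move=> fK f'K; apply: (can2_linear (f := lin_or0 f)) => u /=; rewrite lin_or0E.
Qed.
End LinearFun.

Section Subspace.
Context {V : lmodType K} {S : subspace V}.

Lemma spval_mem (s : sptype S) : sp_mem S (spval s).
Proof. by move: (spvalP s); rewrite unfold_in => /asboolP. Qed.

Lemma sp_inK v : sp_mem S v -> spval (sp_in S v) = v.
Proof. by move=> Sv; rewrite /sp_in; case: pselect. Qed.

Lemma spvalK (s : sptype S) : sp_in S (spval s) = s.
Proof. by apply: val_inj; rewrite /= sp_inK //; exact: spval_mem. Qed.

Lemma sp_in0 : sp_in S 0 = 0.
Proof. by apply: val_inj; rewrite /= sp_inK //; exact: sp_0. Qed.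
End Subspace.

Section Restriction.
Context {V W : lmodType K} {f : V -> W} {S : subspace V} {T : subspace W}.
Hypothesis fST : forall v, sp_mem S v -> sp_mem T (f v).

Lemma restrE s : spval (restr f S T s) = f (spval s).
Proof. by rewrite /restr sp_inK //; apply: fST; exact: spval_mem. Qed.

Lemma restr_linear : linear f -> linear (restr f S T).
Proof. by move=> f_lin a u v; apply: val_inj; rewrite /= !restrE f_lin. Qed.
End Restriction.

Section Iteration.
Context {V : lmodType K} (f : {linear V -> V}).

Lemma iter_linearP n a u v : iter n f (a *: u + v) = a *: iter n f u + iter n f v.
Proof. by elim: n => //= n ->; rewrite linearP. Qed.

Lemma iter_linear0 n : iter n f 0 = 0.
Proof. by elim: n => //= n ->; rewrite linear0. Qed.

Lemma iter_vanish_ge N N' u : iter N f u = 0 -> (N <= N')%N -> iter N' f u = 0.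
Proof. by move=> fNu /subnK <-; rewrite iterD fNu iter_linear0. Qed.
End Iteration.

Lemma finvK {T : Type} {f : T -> T} : bijective f -> cancel f (Defs.finv f).
Proof.
case=> g fK gK; rewrite /Defs.finv; case: pselect => [ex_g|[]]; last by exists g.
by case: (cid ex_g) => h [].
Qed.

Lemma finvKV {T : Type} {f : T -> T} : bijective f -> cancel (Defs.finv f) f.
Proof. by move=> f_bij; case: (f_bij) => g _ gK u; rewrite -{1}[u]gK finvK. Qed.
End LinearAlgebra.

Definition f1_act {K : fieldType} (A : WSP K) (m : wM A) : wM A := m - wy A (wx A m).

Section SubmoduleIM.
Context {K : fieldType} {A : WSP K}.
Local Notation x := (wx A).
Local Notation y := (wy A).
Local Notation alpha := (walpha A).

Lemma f1_act_linear : linear (f1_act A).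
Proof. by move=> a u v; rewrite /f1_act [x _]linearP [y _]linearP scalerBr opprD addrACA. Qed.

Lemma in_IM0 : in_IM A 0.
Proof. by move=> P. Qed.

Lemma in_IMP a u v : in_IM A u -> in_IM A v -> in_IM A (a *: u + v).
Proof.
move=> IMu IMv P P0 PP Px Py Pf; apply: (PP); [exact: (IMu P) | exact: (IMv P)].
Qed.

Lemma in_IMD u v : in_IM A u -> in_IM A v -> in_IM A (u + v).
Proof. by move=> IMu IMv; rewrite -[u]scale1r; apply: in_IMP. Qed.

Lemma in_IMx {u} : in_IM A u -> in_IM A (x u).
Proof. by move=> IMu P P0 PP Px Py Pf; apply: (Px); exact: (IMu P). Qed.

Lemma in_IMy {u} : in_IM A u -> in_IM A (y u).
Proof. by move=> IMu P P0 PP Px Py Pf; apply: (Py); exact: (IMu P). Qed.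

Lemma in_IM_f1_act m : in_IM A (f1_act A m).
Proof. by move=> P P0 PP Px Py Pf; apply: Pf. Qed.

Lemma ker_x_in_IM u : x u = 0 -> in_IM A u.
Proof. by move=> xu0; have := in_IM_f1_act u; rewrite /f1_act xu0 linear0 subr0. Qed.

Lemma in_IM_nilpotent {m} : is_Rmodule A -> in_IM A m -> exists N, iter N x m = 0.
Proof.
move=> xyK IMm; apply: (IMm (fun m => exists N, iter N x m = 0)).
- by exists 0%N.
- move=> a u v [Nu xNu] [Nv xNv]; exists (maxn Nu Nv).
  by rewrite iter_linearP !(iter_vanish_ge _ _ _ _ xNu, iter_vanish_ge _ _ _ _ xNv)
    ?leq_maxl ?leq_maxr // scaler0 addr0.
- move=> u [N xNu]; exists N; rewrite -iterSr; exact: iter_vanish_ge xNu _.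
- by move=> u [N xNu]; exists N.+1; rewrite iterSr xyK.
- by move=> n; exists 1%N; rewrite /= linearB xyK subrr.
Qed.

Lemma f1_act_iter_eq0 N d :
  iter N x d = 0 -> (forall i, f1_act A (iter i x d) = 0) -> d = 0.
Proof.
elim: N d => [//|N IHN] d xNd f1d.
have xd0 : x d = 0.
  by apply: IHN => [|i]; rewrite -iterSr; [exact: xNd | exact: f1d].
by have := f1d 0%N; rewrite /f1_act /= xd0 linear0 subr0.
Qed.

Hypothesis HA : is_WSP_obj A.

Lemma xyK m : x (y m) = m.
Proof. exact: HA.1. Qed.

Lemma alpha_x m : alpha (x m) = x (alpha m).
Proof. by case: HA => _ []. Qed.

Lemma alpha_IM m : in_IM A m -> alpha m = 0.
Proof. by case: HA => _ [_ alpha_IM _]; apply: alpha_IM. Qed.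

Lemma in_IM_sub_alpha m : in_IM A (m - alpha m).
Proof. by case: HA => _ [_ _ alpha_split]; apply: alpha_split. Qed.

Lemma alpha_eq_mod_IM u v : in_IM A (u - v) -> alpha u = alpha v.
Proof. by move/alpha_IM/eqP; rewrite linearB subr_eq0 => /eqP. Qed.

Lemma alpha_idem m : alpha (alpha m) = alpha m.
Proof. by symmetry; apply: alpha_eq_mod_IM; exact: in_IM_sub_alpha. Qed.

Lemma alpha_im {w} : sp_mem (imalpha_sp A) w -> alpha w = w.
Proof. by case=> m <-; rewrite alpha_idem. Qed.

Lemma x_f1_act m : x (f1_act A m) = 0.
Proof. by rewrite /f1_act linearB xyK subrr. Qed.
End SubmoduleIM.

Section WSPHom.
Context {K : fieldType} {A B : WSP K} {phi : wM A -> wM B}.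
Hypothesis Hphi : is_WSP_hom A B phi.

Lemma WSP_hom_lin : linear phi. Proof. by case: Hphi. Qed.
Lemma WSP_hom_x m : phi (wx A m) = wx B (phi m). Proof. by case: Hphi. Qed.
Lemma WSP_hom_y m : phi (wy A m) = wy B (phi m). Proof. by case: Hphi. Qed.

Lemma WSP_hom_IM m : in_IM A m -> in_IM B (phi m).
Proof.
move=> IMm; apply: (IMm (fun m => in_IM B (phi m))).
- rewrite (linear_fun0 WSP_hom_lin); exact: in_IM0.
- by move=> a u v; rewrite WSP_hom_lin; apply: in_IMP.
- by move=> u; rewrite WSP_hom_x; apply: in_IMx.
- by move=> u; rewrite WSP_hom_y; apply: in_IMy.
- by move=> n; rewrite (linear_funB WSP_hom_lin) WSP_hom_y WSP_hom_x; exact: in_IM_f1_act.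
Qed.

Lemma WSP_hom_iter i m : phi (iter i (wx A) m) = iter i (wx B) (phi m).
Proof. by elim: i => //= i <-; rewrite WSP_hom_x. Qed.

Lemma WSP_hom_ker_x v : sp_mem (M0_sp A) v -> sp_mem (M0_sp B) (phi v).
Proof. by move=> /= xv0; rewrite -WSP_hom_x xv0 (linear_fun0 WSP_hom_lin). Qed.

Lemma WSP_hom_im_alpha v : sp_mem (imalpha_sp A) v -> sp_mem (imalpha_sp B) (phi v).
Proof. by case: Hphi => _ _ _ phi_alpha [m <-]; case: (phi_alpha m) => n ->; exists n. Qed.

Lemma WSP_hom_f1_act m : phi (f1_act A m) = f1_act B (phi m).
Proof. by rewrite /f1_act (linear_funB WSP_hom_lin) WSP_hom_y WSP_hom_x. Qed.

(* [beta] is the identity on [phi (alpha m)], which lies in [im beta], and kills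
   [phi (m - alpha m)], which lies in [IM] *)
Lemma WSP_hom_alpha : is_WSP_obj A -> is_WSP_obj B ->
  forall m, phi (walpha A m) = walpha B (phi m).
Proof.
move=> HA HB m.
rewrite -[LHS](alpha_im HB); last by apply: WSP_hom_im_alpha; exists m.
symmetry; apply: (alpha_eq_mod_IM HB); rewrite -(linear_funB WSP_hom_lin).
exact: WSP_hom_IM (in_IM_sub_alpha HA m).
Qed.

Lemma WSP_hom_can2 psi : cancel phi psi -> cancel psi phi ->
  (forall n, exists m, walpha B n = phi (walpha A m)) -> is_WSP_hom B A psi.
Proof.
move=> phiK psiK im_beta; have phi_inj := can_inj phiK.
split.
- exact: linear_can2 WSP_hom_lin _ phiK psiK.
- by move=> n; apply: phi_inj; rewrite WSP_hom_x !psiK.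
- by move=> n; apply: phi_inj; rewrite WSP_hom_y !psiK.
- by move=> n; have [m ->] := im_beta n; exists m; rewrite phiK.
Qed.
End WSPHom.

Section XiObj.
Context {K : fieldType} {A : WSP K}.
Hypothesis HA : is_WSP_obj A.
Local Notation x := (wx A).
Local Notation y := (wy A).
Local Notation alpha := (walpha A).

Lemma x_im_alpha w : sp_mem (imalpha_sp A) w -> sp_mem (imalpha_sp A) (x w).
Proof. by case=> m <-; exists (x m); exact: alpha_x. Qed.

Lemma ker_x_Xi_e w : sp_mem (imalpha_sp A) w -> sp_mem (M0_sp A) (y w - alpha (y w)).
Proof. by move=> imw /=; rewrite linearB -(alpha_x HA) !(xyK HA) (alpha_im HA imw) subrr. Qed.

Lemma Xi_fE v : spval (psi_f (Xi_obj A) v) = x (spval v).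
Proof.
rewrite /= lin_or0E ?restrE //; first exact: x_im_alpha.
exact: restr_linear x_im_alpha (linearPZ x).
Qed.

Lemma Xi_eE v : spval (psi_e (Xi_obj A) v) = y (spval v) - alpha (y (spval v)).
Proof.
have e_lin : linear (fun m => y m - alpha (y m)).
  by move=> a u w; rewrite [y _]linearP [alpha _]linearP scalerBr opprD addrACA.
by rewrite /= lin_or0E ?restrE //; [exact: ker_x_Xi_e | exact: restr_linear ker_x_Xi_e _].
Qed.

(* the inverse of [x] on [im alpha] is [alpha o y] *)
Lemma Xi_D_obj : is_D_obj (Xi_obj A).
Proof.
have im_alpha_y v : sp_mem (imalpha_sp A) (alpha (y (spval v))) by exists (y (spval v)).
exists (fun v => sp_in (imalpha_sp A) (alpha (y (spval v)))) => v; apply: val_inj => /=.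
- rewrite sp_inK // Xi_fE; symmetry.
  rewrite -[LHS](alpha_im HA (spval_mem v)); apply: (alpha_eq_mod_IM HA); exact: in_IM_f1_act.
- by rewrite Xi_fE sp_inK // -(alpha_x HA) (xyK HA) (alpha_im HA (spval_mem v)).
Qed.
End XiObj.

Section XiFunctor.
Context {K : fieldType}.

Lemma Xi_D_hom (A B : WSP K) (phi : wM A -> wM B) :
  is_WSP_obj A -> is_WSP_obj B -> is_WSP_hom A B phi ->
  is_D_hom (Xi_obj A) (Xi_obj B) (Xi_hom_u A B phi) (Xi_hom_v A B phi).
Proof.
move=> HA HB Hphi; have phi_lin := WSP_hom_lin Hphi.
have phi_ker := WSP_hom_ker_x Hphi; have phi_im := WSP_hom_im_alpha Hphi.
split; [exact: restr_linear phi_ker phi_lin | exact: restr_linear phi_im phi_lin | |].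
- move=> v; apply: val_inj => /=.
  rewrite (restrE phi_ker) (Xi_eE HA) (Xi_eE HB) (restrE phi_im) (linear_funB phi_lin).
  by rewrite (WSP_hom_alpha Hphi HA HB) WSP_hom_y.
- move=> v; apply: val_inj => /=.
  by rewrite (restrE phi_im) (Xi_fE HA) (Xi_fE HB) (restrE phi_im) WSP_hom_x.
Qed.

Lemma Xi_hom_id (A : WSP K) : Xi_hom_u A A id =1 id /\ Xi_hom_v A A id =1 id.
Proof. by split=> v; rewrite /Xi_hom_u /Xi_hom_v /restr spvalK. Qed.

Lemma Xi_hom_comp (A B C : WSP K) (phi : wM A -> wM B) (chi : wM B -> wM C) :
  is_WSP_hom A B phi -> is_WSP_hom B C chi ->
  Xi_hom_u A C (chi \o phi) =1 Xi_hom_u B C chi \o Xi_hom_u A B phi /\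
  Xi_hom_v A C (chi \o phi) =1 Xi_hom_v B C chi \o Xi_hom_v A B phi.
Proof.
move=> Hphi Hchi; have phi_ker := WSP_hom_ker_x Hphi; have chi_ker := WSP_hom_ker_x Hchi.
have phi_im := WSP_hom_im_alpha Hphi; have chi_im := WSP_hom_im_alpha Hchi.
split=> v; apply: val_inj => /=.
- by rewrite !restrE //= => w /phi_ker /chi_ker.
- by rewrite !restrE //= => w /phi_im /chi_im.
Qed.
End XiFunctor.

Section TensorS1.
Context {K : fieldType} {U : lmodType K}.
Implicit Types (s : S1tensor U) (t : nat -> U).

Lemma mkS1K t : sp_mem (finsupp_sp U) t -> spval (mkS1 t) = t.
Proof. exact: sp_inK. Qed.

Lemma S1tensor_ext s s' : spval s =1 spval s' -> s = s'.
Proof. by move=> ss'; apply: val_inj; apply: funext. Qed.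

Lemma spval_shift s : spval (mkS1 (fun i => spval s i.+1)) = (fun i => spval s i.+1).
Proof. by apply: mkS1K; case: (spval_mem s) => n sn; exists n => i /leqW /sn. Qed.

Lemma spval_cons s u :
  spval (mkS1 (fun i => if i is j.+1 then spval s j else u))
  = (fun i => if i is j.+1 then spval s j else u).
Proof. by apply: mkS1K; case: (spval_mem s) => n sn; exists n.+1 => -[|i] //= /sn. Qed.

Definition f1_tensor u : S1tensor U := mkS1 (fun i => if i is _.+1 then 0 else u).

Lemma f1_tensorE u : spval (f1_tensor u) = (fun i => if i is _.+1 then 0 else u).
Proof. by apply: mkS1K; exists 1%N => -[]. Qed.
End TensorS1.

Lemma spval_map {K : fieldType} {U W : lmodType K} (f : U -> W) (s : S1tensor U) :
  f 0 = 0 -> spval (mkS1 (fun i => f (spval s i))) = (fun i => f (spval s i)).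
Proof. by move=> f0; apply: mkS1K; case: (spval_mem s) => n sn; exists n => i /sn ->. Qed.

Lemma spval_pairP {K : fieldType} {U W : lmodType K} a (p q : S1tensor U * W) i :
  spval (a *: p + q).1 i = a *: spval p.1 i + spval q.1 i.
Proof. by []. Qed.

Lemma spval_pairD {K : fieldType} {U W : lmodType K} (p q : S1tensor U * W) i :
  spval (p + q).1 i = spval p.1 i + spval q.1 i.
Proof. by []. Qed.

Lemma spval_pairB {K : fieldType} {U W : lmodType K} (p q : S1tensor U * W) i :
  spval (p - q).1 i = spval p.1 i - spval q.1 i.
Proof. by []. Qed.

Section PsiObj.
Context {K : fieldType} {rho : QRep K}.
Local Notation P := (Psi_obj rho).
Local Notation f := (psi_f rho).

Lemma Psi_ext (p q : wM P) : spval p.1 =1 spval q.1 -> p.2 = q.2 -> p = q.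
Proof. by case: p q => [s v] [s' v'] /= /S1tensor_ext -> ->. Qed.

Lemma Psi_x_coeff p i : spval (Psi_x_fun rho p).1 i = spval p.1 i.+1.
Proof. by rewrite /= spval_shift. Qed.

Lemma Psi_y_coeff p i :
  spval (Psi_y_fun rho p).1 i = if i is j.+1 then spval p.1 j else psi_e rho p.2.
Proof. by rewrite /= spval_cons. Qed.

Lemma Psi_x_linear : linear (Psi_x_fun rho).
Proof.
move=> a p q; apply: Psi_ext => [i|]; first by rewrite !(spval_pairP, Psi_x_coeff).
by rewrite /= linearP.
Qed.

Lemma Psi_xE : wx P =1 Psi_x_fun rho.
Proof. exact: lin_or0E Psi_x_linear. Qed.

Lemma Psi_alphaE p : walpha P p = (0, p.2).
Proof.
apply: lin_or0E => a u v; apply: Psi_ext => [i|] //=.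
by rewrite scaler0 addr0.
Qed.

Lemma Psi_x_f1_tensor u : wx P (f1_tensor u, 0) = 0.
Proof.
rewrite Psi_xE; apply: Psi_ext => [i|]; first by rewrite Psi_x_coeff f1_tensorE.
exact: linear0.
Qed.

Hypothesis HD : is_D_obj rho.

Lemma finv_linear : linear (Defs.finv f).
Proof. exact: linear_can2 (linearPZ f) _ (finvK HD) (finvKV HD). Qed.

Lemma Psi_y_linear : linear (Psi_y_fun rho).
Proof.
move=> a p q; apply: Psi_ext => [i|].
  by rewrite !(spval_pairP, Psi_y_coeff); case: i => //=; rewrite linearP.
by rewrite /= finv_linear.
Qed.

Lemma Psi_yE : wy P =1 Psi_y_fun rho.
Proof. exact: lin_or0E Psi_y_linear. Qed.

(* [(s, 0) = y (s_(. + 1), 0) + (f1 (x) s_0, 0)]: induction on the support of [s] *)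
Lemma Psi_tensor_ind (Q : wM P -> Prop) :
  Q 0 -> (forall p q, Q p -> Q q -> Q (p + q)) -> (forall p, Q p -> Q (wy P p)) ->
  (forall u, Q (f1_tensor u, 0)) -> forall s, Q (s, 0).
Proof.
move=> Q0 QD Qy Qf1 s; have [n] := spval_mem s; elim: n s => [|n IHn] s sn.
  suff -> : s = 0 by exact: Q0.
  by apply: S1tensor_ext => i; rewrite sn.
have -> : ((s, 0) : wM P) = wy P (mkS1 (fun i => spval s i.+1), 0) + (f1_tensor (spval s 0), 0).
  rewrite Psi_yE; apply: Psi_ext => [i|]; last by rewrite /= (linear_fun0 finv_linear) addr0.
  rewrite spval_pairD Psi_y_coeff f1_tensorE; case: i => [|i] /=.
    by rewrite linear0 add0r.
  by rewrite spval_shift addr0.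
apply: QD (Qf1 _); apply: Qy; apply: IHn => i ni; rewrite spval_shift; exact: sn.
Qed.

Lemma Psi_WSP_obj : is_WSP_obj P.
Proof.
split.
  move=> p; rewrite Psi_yE Psi_xE; apply: Psi_ext => [i|].
    by rewrite Psi_x_coeff Psi_y_coeff.
  by rewrite /= finvKV.
split.
- move=> p; rewrite !Psi_alphaE !Psi_xE; apply: Psi_ext => [i|] //.
  by rewrite Psi_x_coeff.
- move=> p IMp; rewrite Psi_alphaE; suff -> : p.2 = 0 by [].
  apply: (IMp (fun p => p.2 = 0)) => //.
  + by move=> a u v /= -> ->; rewrite scaler0 addr0.
  + by move=> u; rewrite Psi_xE /= => ->; rewrite linear0.
  + by move=> u; rewrite Psi_yE /= => ->; rewrite (linear_fun0 finv_linear).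
  + by move=> u; rewrite Psi_yE Psi_xE /= finvK // subrr.
- move=> p; have -> : p - walpha P p = (p.1, 0).
    by rewrite Psi_alphaE; apply: Psi_ext => [i|] /=; rewrite ?subr0 ?subrr.
  apply: Psi_tensor_ind => [|p' q'|p'|u]; [exact: in_IM0 | exact: in_IMD | exact: in_IMy |].
  by apply: ker_x_in_IM; exact: Psi_x_f1_tensor.
Qed.
End PsiObj.

Lemma Psi_hom_coeff {K : fieldType} {rho sigma : QRep K} {phu : Mu rho -> Mu sigma}
    {phv : Mv rho -> Mv sigma} p i :
  phu 0 = 0 -> spval (Psi_hom rho sigma phu phv p).1 i = phu (spval p.1 i).
Proof. by move=> phu0; rewrite /= spval_map. Qed.

Section DHom.
Context {K : fieldType} {rho sigma : QRep K}.
Context {phu : Mu rho -> Mu sigma} {phv : Mv rho -> Mv sigma}.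
Hypothesis Hph : is_D_hom rho sigma phu phv.

Lemma D_hom_lin_u : linear phu. Proof. by case: Hph. Qed.
Lemma D_hom_lin_v : linear phv. Proof. by case: Hph. Qed.
Lemma D_hom_e m : phu (psi_e rho m) = psi_e sigma (phv m). Proof. by case: Hph. Qed.
Lemma D_hom_f m : phv (psi_f rho m) = psi_f sigma (phv m). Proof. by case: Hph. Qed.

Lemma D_hom_can2 phu' phv' : cancel phu phu' -> cancel phu' phu ->
  cancel phv phv' -> cancel phv' phv -> is_D_hom sigma rho phu' phv'.
Proof.
move=> uK u'K vK v'K; split.
- exact: linear_can2 D_hom_lin_u _ uK u'K.
- exact: linear_can2 D_hom_lin_v _ vK v'K.
- by move=> m; apply: (can_inj uK); rewrite u'K D_hom_e v'K.
- by move=> m; apply: (can_inj vK); rewrite v'K D_hom_f v'K.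
Qed.

Lemma Psi_WSP_hom : is_D_obj rho -> is_D_obj sigma ->
  is_WSP_hom (Psi_obj rho) (Psi_obj sigma) (Psi_hom rho sigma phu phv).
Proof.
move=> Hrho Hsigma; have phu0 := linear_fun0 D_hom_lin_u; split.
- move=> a p q; apply: Psi_ext => [i|].
    by rewrite !(spval_pairP, Psi_hom_coeff) // D_hom_lin_u.
  exact: D_hom_lin_v.
- move=> p; rewrite !Psi_xE; apply: Psi_ext => [i|].
    by rewrite Psi_hom_coeff // !Psi_x_coeff Psi_hom_coeff.
  exact: D_hom_f.
- move=> p; rewrite (Psi_yE Hrho) (Psi_yE Hsigma); apply: Psi_ext => [i|].
    by rewrite Psi_hom_coeff // !Psi_y_coeff; case: i => [|i]; rewrite ?Psi_hom_coeff ?D_hom_e.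
  apply: (can_inj (finvK Hsigma)).
  by rewrite /= -D_hom_f !(finvKV Hrho, finvKV Hsigma).
- move=> p; exists (0, phv p.2); rewrite !Psi_alphaE; apply: Psi_ext => [i|] //.
  by rewrite Psi_hom_coeff.
Qed.
End DHom.

Lemma Psi_hom_id {K : fieldType} (rho : QRep K) : Psi_hom rho rho id id =1 id.
Proof. by move=> p; apply: Psi_ext => [i|] //; rewrite Psi_hom_coeff. Qed.

Lemma Psi_hom_comp {K : fieldType} (rho sigma tau : QRep K)
    (phu : Mu rho -> Mu sigma) (phv : Mv rho -> Mv sigma)
    (chu : Mu sigma -> Mu tau) (chv : Mv sigma -> Mv tau) :
  is_D_hom rho sigma phu phv -> is_D_hom sigma tau chu chv ->
  Psi_hom rho tau (chu \o phu) (chv \o phv)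
    =1 Psi_hom sigma tau chu chv \o Psi_hom rho sigma phu phv.
Proof.
move=> Hph Hch p; have phu0 := linear_fun0 (D_hom_lin_u Hph).
have chu0 := linear_fun0 (D_hom_lin_u Hch).
by apply: Psi_ext => [i|] //; rewrite !Psi_hom_coeff //= phu0.
Qed.

Definition IM_part {K : fieldType} (A : WSP K) (m : wM A) : wM A := m - walpha A m.

(* [k_i(m) = f1 x^i (m - alpha m)], the coefficient of [y^i f1] in the unit isomorphism *)
Definition tensor_coeff {K : fieldType} (A : WSP K) (i : nat) (m : wM A) : wM A :=
  f1_act A (iter i (wx A) (IM_part A m)).

Definition unit_iso {K : fieldType} (A : WSP K) (m : wM A) : wM (Psi_obj (Xi_obj A)) :=
  (mkS1 (fun i => sp_in (M0_sp A) (tensor_coeff A i m)), sp_in (imalpha_sp A) (walpha A m)).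

Definition unit_iso_inv {K : fieldType} (A : WSP K) (p : wM (Psi_obj (Xi_obj A))) : wM A :=
  if pselect (exists m, unit_iso A m = p) is left ex_m then proj1_sig (cid ex_m) else 0.

Lemma PsiXi_ext {K : fieldType} {A : WSP K} (p q : wM (Psi_obj (Xi_obj A))) :
  (forall i, spval (spval p.1 i) = spval (spval q.1 i)) -> spval p.2 = spval q.2 -> p = q.
Proof. by move=> pq1 pq2; apply: Psi_ext => [i|]; apply: val_inj; [exact: pq1 | exact: pq2]. Qed.

Section UnitIso.
Context {K : fieldType} {A : WSP K}.
Hypothesis HA : is_WSP_obj A.
Local Notation x := (wx A).
Local Notation y := (wy A).
Local Notation alpha := (walpha A).
Local Notation P := (Psi_obj (Xi_obj A)).

Lemma IM_part_linear : linear (IM_part A).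
Proof. by move=> a u v; rewrite /IM_part [alpha _]linearP scalerBr opprD addrACA. Qed.

Lemma tensor_coeff_linear i : linear (tensor_coeff A i).
Proof. by move=> a u v; rewrite /tensor_coeff IM_part_linear iter_linearP f1_act_linear. Qed.

Lemma tensor_coeff_ker_x i m : sp_mem (M0_sp A) (tensor_coeff A i m).
Proof. exact: x_f1_act. Qed.

Lemma tensor_coeff_alpha i m : tensor_coeff A i (alpha m) = 0.
Proof.
by rewrite /tensor_coeff /IM_part (alpha_idem HA) subrr iter_linear0 (linear_fun0 f1_act_linear).
Qed.

Lemma tensor_coeff_x i m : tensor_coeff A i (x m) = tensor_coeff A i.+1 m.
Proof. by rewrite /tensor_coeff /IM_part (alpha_x HA) -linearB -iterSr. Qed.

Lemma tensor_coeff_y i m : tensor_coeff A i.+1 (y m) = tensor_coeff A i m.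
Proof. by rewrite /tensor_coeff /IM_part iterSr linearB -(alpha_x HA) !(xyK HA). Qed.

(* [alpha (y m) = alpha (y (alpha m))] as [y (m - alpha m)] lies in [IM] *)
Lemma tensor_coeff0_y m : tensor_coeff A 0 (y m) = y (alpha m) - alpha (y (alpha m)).
Proof.
have -> : alpha (y (alpha m)) = alpha (y m).
  by symmetry; apply: (alpha_eq_mod_IM HA); rewrite -linearB; exact: in_IMy (in_IM_sub_alpha HA m).
rewrite /tensor_coeff /IM_part /f1_act /= linearB -(alpha_x HA) !(xyK HA) linearB.
by rewrite opprB addrC addrA subrK.
Qed.

Lemma tensor_coeff_finsupp m :
  sp_mem (finsupp_sp (Mu (Xi_obj A))) (fun i => sp_in (M0_sp A) (tensor_coeff A i m)).
Proof.
have [N xN] := in_IM_nilpotent HA.1 (in_IM_sub_alpha HA m).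
exists N => i Ni; rewrite /tensor_coeff /IM_part (iter_vanish_ge _ _ _ _ xN Ni).
by rewrite (linear_fun0 f1_act_linear) sp_in0.
Qed.

Lemma unit_iso_coeff m i : spval (spval (unit_iso A m).1 i) = tensor_coeff A i m.
Proof.
by rewrite /= mkS1K ?sp_inK //; [exact: tensor_coeff_ker_x | exact: tensor_coeff_finsupp].
Qed.

Lemma unit_iso_v m : spval (unit_iso A m).2 = alpha m.
Proof. by rewrite sp_inK //; exists m. Qed.

Lemma unit_iso_linear : linear (unit_iso A).
Proof.
move=> a u v; apply: PsiXi_ext => [i|].
  by rewrite unit_iso_coeff tensor_coeff_linear -!unit_iso_coeff.
by rewrite unit_iso_v linearP -!unit_iso_v.
Qed.

Lemma unit_iso_x m : unit_iso A (x m) = wx P (unit_iso A m).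
Proof.
rewrite Psi_xE; apply: PsiXi_ext => [i|].
  by rewrite unit_iso_coeff Psi_x_coeff unit_iso_coeff tensor_coeff_x.
by rewrite unit_iso_v /= (Xi_fE HA) unit_iso_v (alpha_x HA).
Qed.

Lemma unit_iso_y m : unit_iso A (y m) = wy P (unit_iso A m).
Proof.
have HD := Xi_D_obj HA.
rewrite (Psi_yE HD); apply: PsiXi_ext => [[|i]|].
- by rewrite unit_iso_coeff Psi_y_coeff (Xi_eE HA) unit_iso_v tensor_coeff0_y.
- by rewrite unit_iso_coeff Psi_y_coeff unit_iso_coeff tensor_coeff_y.
change (spval (unit_iso A (y m)).2 = spval (Defs.finv (psi_f (Xi_obj A)) (unit_iso A m).2)).
have im_alpha_y : sp_mem (imalpha_sp A) (alpha (y m)) by exists (y m).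
have <- : psi_f (Xi_obj A) (sp_in (imalpha_sp A) (alpha (y m))) = (unit_iso A m).2.
  by apply: val_inj => /=; rewrite (Xi_fE HA) sp_inK // -(alpha_x HA) (xyK HA) unit_iso_v.
by rewrite unit_iso_v finvK // sp_inK.
Qed.

Lemma unit_iso_alpha m : unit_iso A (alpha m) = walpha P (unit_iso A m).
Proof.
rewrite Psi_alphaE; apply: PsiXi_ext => [i|].
  by rewrite unit_iso_coeff tensor_coeff_alpha.
by rewrite !unit_iso_v (alpha_idem HA).
Qed.

Lemma unit_iso_WSP_hom : is_WSP_hom A P (unit_iso A).
Proof.
split; [exact: unit_iso_linear | exact: unit_iso_x | exact: unit_iso_y |].
by move=> m; exists (unit_iso A m); exact: unit_iso_alpha.
Qed.

Lemma unit_iso_inj : injective (unit_iso A).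
Proof.
move=> m m' E; apply/eqP; rewrite -subr_eq0; apply/eqP.
have E0 : unit_iso A (m - m') = 0 by rewrite (linear_funB unit_iso_linear) E subrr.
have alpha0 : alpha (m - m') = 0 by rewrite -unit_iso_v E0.
have IMd : in_IM A (m - m') by rewrite -[m - m']subr0 -alpha0; exact: in_IM_sub_alpha.
have [N xN] := in_IM_nilpotent HA.1 IMd.
apply: (f1_act_iter_eq0 N _ xN) => i.
by have := unit_iso_coeff (m - m') i; rewrite E0 /tensor_coeff /IM_part alpha0 subr0 => <-.
Qed.

Lemma unit_iso_im_alpha (w : Mv (Xi_obj A)) : unit_iso A (spval w) = (0, w).
Proof.
have alpha_w := alpha_im HA (spval_mem w).
apply: PsiXi_ext => [i|]; last by rewrite unit_iso_v.
by rewrite unit_iso_coeff -alpha_w tensor_coeff_alpha.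
Qed.

Lemma unit_iso_f1_tensor (u : Mu (Xi_obj A)) : unit_iso A (spval u) = (f1_tensor u, 0).
Proof.
have xu0 : x (spval u) = 0 := spval_mem u.
have alpha_u : alpha (spval u) = 0 by apply: (alpha_IM HA); exact: ker_x_in_IM.
apply: PsiXi_ext => [i|]; last by rewrite unit_iso_v.
rewrite unit_iso_coeff f1_tensorE /tensor_coeff /IM_part alpha_u subr0.
case: i => [|i]; first by rewrite /f1_act /= xu0 linear0 subr0.
by rewrite iterSr xu0 iter_linear0 (linear_fun0 f1_act_linear).
Qed.

Lemma unit_iso_surj p : exists m, unit_iso A m = p.
Proof.
have imD q q' : (exists m, unit_iso A m = q) -> (exists m, unit_iso A m = q') ->
    exists m, unit_iso A m = q + q'.
  by move=> [m <-] [m' <-]; exists (m + m'); rewrite (linear_funD unit_iso_linear).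
case: p => s w; have -> : ((s, w) : wM P) = (s, 0) + (0, w).
  by apply: Psi_ext => [i|] /=; rewrite ?addr0 ?add0r.
apply: (imD); last by exists (spval w); exact: unit_iso_im_alpha.
apply: (Psi_tensor_ind (Xi_D_obj HA) (fun p => exists m, unit_iso A m = p)) => [|q q'|q [m <-]|u].
- by exists 0; rewrite (linear_fun0 unit_iso_linear).
- exact: imD.
- by exists (y m); rewrite unit_iso_y.
- by exists (spval u); exact: unit_iso_f1_tensor.
Qed.

Lemma unit_iso_invK : cancel (unit_iso_inv A) (unit_iso A).
Proof.
move=> p; rewrite /unit_iso_inv; case: pselect => [ex_m|[]]; last exact: unit_iso_surj.
exact: proj2_sig (cid ex_m).
Qed.

Lemma unit_isoK : cancel (unit_iso A) (unit_iso_inv A).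
Proof. by move=> m; apply: unit_iso_inj; rewrite unit_iso_invK. Qed.

Lemma unit_iso_inv_WSP_hom : is_WSP_hom P A (unit_iso_inv A).
Proof.
apply: (WSP_hom_can2 unit_iso_WSP_hom _ unit_isoK unit_iso_invK) => p.
by exists (spval p.2); rewrite Psi_alphaE -unit_iso_im_alpha (alpha_im HA (spval_mem p.2)).
Qed.
End UnitIso.

Lemma unit_iso_natural {K : fieldType} (A B : WSP K) (phi : wM A -> wM B) :
  is_WSP_obj A -> is_WSP_obj B -> is_WSP_hom A B phi ->
  Psi_hom (Xi_obj A) (Xi_obj B) (Xi_hom_u A B phi) (Xi_hom_v A B phi) \o unit_iso A
    =1 unit_iso B \o phi.
Proof.
move=> HA HB Hphi m; have phi_lin := WSP_hom_lin Hphi.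
have Xi_phi0 := linear_fun0 (D_hom_lin_u (Xi_D_hom _ _ _ HA HB Hphi)).
have phi_alpha := WSP_hom_alpha Hphi HA HB.
rewrite /comp; apply: PsiXi_ext => [i|].
  rewrite Psi_hom_coeff // (restrE (WSP_hom_ker_x Hphi)) !(unit_iso_coeff HA, unit_iso_coeff HB).
  rewrite /tensor_coeff /IM_part WSP_hom_f1_act // WSP_hom_iter //.
  by rewrite (linear_funB phi_lin) phi_alpha.
by rewrite (restrE (WSP_hom_im_alpha Hphi)) !unit_iso_v phi_alpha.
Qed.

Section CounitDefs.
Context {K : fieldType} (rho : QRep K).
Local Notation P := (Psi_obj rho).

Definition counit_u (q : Mu (Xi_obj P)) : Mu rho := spval (spval q).1 0.
Definition counit_v (q : Mv (Xi_obj P)) : Mv rho := (spval q).2.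
Definition counit_u_inv (u : Mu rho) : Mu (Xi_obj P) := sp_in (M0_sp P) (f1_tensor u, 0).
Definition counit_v_inv (w : Mv rho) : Mv (Xi_obj P) := sp_in (imalpha_sp P) (0, w).
End CounitDefs.

Section Counit.
Context {K : fieldType} {rho : QRep K}.
Hypothesis HD : is_D_obj rho.
Local Notation P := (Psi_obj rho).

Lemma Psi_ker_x p : wx P p = 0 -> p = (f1_tensor (spval p.1 0), 0).
Proof.
move=> xp0; apply: Psi_ext => [[|i]|]; rewrite ?f1_tensorE //.
  by have := congr1 (fun q => spval q.1 i) xp0; rewrite /= Psi_xE Psi_x_coeff.
have /= fp0 := congr1 snd xp0; rewrite Psi_xE /= in fp0.
by rewrite -[p.2](finvK HD) fp0 (linear_fun0 (finv_linear HD)).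
Qed.

Lemma Psi_im_alpha (w : Mv rho) : sp_mem (imalpha_sp P) (0, w).
Proof. by exists (0, w); rewrite Psi_alphaE. Qed.

Lemma counit_D_hom : is_D_hom (Xi_obj P) rho (counit_u rho) (counit_v rho).
Proof.
split=> [a q q'|a q q'|q|q].
- by rewrite /counit_u /=.
- by rewrite /counit_v /=.
- rewrite /counit_u (Xi_eE (Psi_WSP_obj HD)) Psi_alphaE (Psi_yE HD).
  by rewrite spval_pairB Psi_y_coeff /= subr0.
- by rewrite /counit_v (Xi_fE (Psi_WSP_obj HD)) Psi_xE.
Qed.

Lemma counit_uK : cancel (counit_u rho) (counit_u_inv rho).
Proof.
move=> q; apply: val_inj; rewrite /= sp_inK; last exact: Psi_x_f1_tensor.
by rewrite [RHS]Psi_ker_x //; exact: (spval_mem q).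
Qed.

Lemma counit_u_invK : cancel (counit_u_inv rho) (counit_u rho).
Proof. by move=> u; rewrite /counit_u sp_inK ?f1_tensorE //; exact: Psi_x_f1_tensor. Qed.

Lemma counit_vK : cancel (counit_v rho) (counit_v_inv rho).
Proof.
move=> q; apply: val_inj; rewrite /= sp_inK; last exact: Psi_im_alpha.
rewrite /counit_v; have [p <-] : exists p, walpha P p = spval q := spval_mem q.
by rewrite Psi_alphaE.
Qed.

Lemma counit_v_invK : cancel (counit_v_inv rho) (counit_v rho).
Proof. by move=> w; rewrite /counit_v sp_inK //; exact: Psi_im_alpha. Qed.
End Counit.

Lemma counit_natural {K : fieldType} (rho sigma : QRep K)
    (phu : Mu rho -> Mu sigma) (phv : Mv rho -> Mv sigma) :
  is_D_obj rho -> is_D_obj sigma -> is_D_hom rho sigma phu phv ->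
  phu \o counit_u rho
    =1 counit_u sigma \o Xi_hom_u (Psi_obj rho) (Psi_obj sigma) (Psi_hom rho sigma phu phv) /\
  phv \o counit_v rho
    =1 counit_v sigma \o Xi_hom_v (Psi_obj rho) (Psi_obj sigma) (Psi_hom rho sigma phu phv).
Proof.
move=> Hrho Hsigma Hph; have Ph := Psi_WSP_hom Hph Hrho Hsigma.
split=> q; rewrite /comp /counit_u /counit_v /Xi_hom_u /Xi_hom_v.
- by rewrite (restrE (WSP_hom_ker_x Ph)) Psi_hom_coeff // (linear_fun0 (D_hom_lin_u Hph)).
- by rewrite (restrE (WSP_hom_im_alpha Ph)).
Qed.

Theorem theorem6 (K : fieldType) :
  (* Xi : C -> D is a functor (as recalled in the context) *)
  [/\ forall A : WSP K, is_WSP_obj A -> is_D_obj (Xi_obj A),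
      forall (A B : WSP K) (phi : wM A -> wM B),
        is_WSP_obj A -> is_WSP_obj B -> is_WSP_hom A B phi ->
        is_D_hom (Xi_obj A) (Xi_obj B) (Xi_hom_u A B phi) (Xi_hom_v A B phi),
      forall A : WSP K, is_WSP_obj A ->
        Xi_hom_u A A id =1 id /\ Xi_hom_v A A id =1 id
    & forall (A B C : WSP K) (phi : wM A -> wM B) (chi : wM B -> wM C),
        is_WSP_obj A -> is_WSP_obj B -> is_WSP_obj C ->
        is_WSP_hom A B phi -> is_WSP_hom B C chi ->
        Xi_hom_u A C (chi \o phi) =1 Xi_hom_u B C chi \o Xi_hom_u A B phi /\
        Xi_hom_v A C (chi \o phi) =1 Xi_hom_v B C chi \o Xi_hom_v A B phi] /\
  (* Psi : D -> C is a functor *)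
  [/\ forall rho : QRep K, is_D_obj rho -> is_WSP_obj (Psi_obj rho),
      forall (rho sigma : QRep K) (phu : Mu rho -> Mu sigma) (phv : Mv rho -> Mv sigma),
        is_D_obj rho -> is_D_obj sigma -> is_D_hom rho sigma phu phv ->
        is_WSP_hom (Psi_obj rho) (Psi_obj sigma) (Psi_hom rho sigma phu phv),
      forall rho : QRep K, is_D_obj rho -> Psi_hom rho rho id id =1 id
    & forall (rho sigma tau : QRep K)
        (phu : Mu rho -> Mu sigma) (phv : Mv rho -> Mv sigma)
        (chu : Mu sigma -> Mu tau) (chv : Mv sigma -> Mv tau),
        is_D_obj rho -> is_D_obj sigma -> is_D_obj tau ->
        is_D_hom rho sigma phu phv -> is_D_hom sigma tau chu chv ->
        Psi_hom rho tau (chu \o phu) (chv \o phv)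
          =1 Psi_hom sigma tau chu chv \o Psi_hom rho sigma phu phv] /\
  (* a natural isomorphism Id_C ~= Psi o Xi *)
  (exists (eta : forall A : WSP K, wM A -> wM (Psi_obj (Xi_obj A)))
          (eta' : forall A : WSP K, wM (Psi_obj (Xi_obj A)) -> wM A),
     (forall A : WSP K, is_WSP_obj A ->
        [/\ is_WSP_hom A (Psi_obj (Xi_obj A)) (eta A),
            is_WSP_hom (Psi_obj (Xi_obj A)) A (eta' A),
            cancel (eta A) (eta' A) & cancel (eta' A) (eta A)]) /\
     (forall (A B : WSP K) (phi : wM A -> wM B),
        is_WSP_obj A -> is_WSP_obj B -> is_WSP_hom A B phi ->
        Psi_hom (Xi_obj A) (Xi_obj B) (Xi_hom_u A B phi) (Xi_hom_v A B phi) \o eta A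
          =1 eta B \o phi)) /\
  (* a natural isomorphism Xi o Psi ~= Id_D *)
  (exists (epu : forall rho : QRep K, Mu (Xi_obj (Psi_obj rho)) -> Mu rho)
          (epv : forall rho : QRep K, Mv (Xi_obj (Psi_obj rho)) -> Mv rho)
          (epu' : forall rho : QRep K, Mu rho -> Mu (Xi_obj (Psi_obj rho)))
          (epv' : forall rho : QRep K, Mv rho -> Mv (Xi_obj (Psi_obj rho))),
     (forall rho : QRep K, is_D_obj rho ->
        [/\ is_D_hom (Xi_obj (Psi_obj rho)) rho (epu rho) (epv rho),
            is_D_hom rho (Xi_obj (Psi_obj rho)) (epu' rho) (epv' rho),
            cancel (epu rho) (epu' rho) /\ cancel (epu' rho) (epu rho)
          & cancel (epv rho) (epv' rho) /\ cancel (epv' rho) (epv rho)]) /\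
     (forall (rho sigma : QRep K) (phu : Mu rho -> Mu sigma) (phv : Mv rho -> Mv sigma),
        is_D_obj rho -> is_D_obj sigma -> is_D_hom rho sigma phu phv ->
        phu \o epu rho
          =1 epu sigma \o Xi_hom_u (Psi_obj rho) (Psi_obj sigma) (Psi_hom rho sigma phu phv) /\
        phv \o epv rho
          =1 epv sigma \o Xi_hom_v (Psi_obj rho) (Psi_obj sigma) (Psi_hom rho sigma phu phv))).
Proof.
split.
  split=> [A|A B phi|A _|A B C phi chi _ _ _];
    [exact: Xi_D_obj | exact: Xi_D_hom | exact: Xi_hom_id | exact: Xi_hom_comp].
split.
  split=> [rho|rho sigma phu phv Hrho Hsigma Hph|rho _|rho sigma tau phu phv chu chv _ _ _].
  - exact: Psi_WSP_obj.
  - exact: Psi_WSP_hom.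
  - exact: Psi_hom_id.
  - exact: Psi_hom_comp.
split.
  exists unit_iso, unit_iso_inv; split=> [A HA|]; last exact: unit_iso_natural.
  split; [exact: unit_iso_WSP_hom | exact: unit_iso_inv_WSP_hom | |].
  - exact: unit_isoK.
  - exact: unit_iso_invK.
exists counit_u, counit_v, counit_u_inv, counit_v_inv.
split=> [rho HD|]; last exact: counit_natural.
have hom := counit_D_hom HD; have uK := counit_uK HD; have u'K := @counit_u_invK _ rho.
have vK := @counit_vK _ rho; have v'K := @counit_v_invK _ rho.
by split=> //; exact: D_hom_can2 hom _ _ uK u'K vK v'K.
Qed.
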